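(* Let $d \in \mathbb{N}$ (with $d\ge 1$). Then every strongly $d$-degenerate graph $G$ satisfies $\mathrm{HG}(G) \le (2d)^d$.
   Context: All graphs are finite and simple. Hat guessing game: players sit on the vertices of a graph $G$; a strategy with $q$ colours is a family $(f_v)_{v\in V(G)}$ with $f_v\colon [q]^{N_G(v)}\to[q]$. An adversary chooses a colouring $c\colon V(G)\to[q]$; the strategy is winning if for every $c$ there is a vertex $v$ with $f_v((c(w))_{w\in N_G(v)})=c(v)$. The hat guessing number $\mathrm{HG}(G)$ is the largest integer $q$ for which a winning strategy with $q$ colours exists. For an integer $d\ge1$, a vertex $v$ of a graph $G$ is $d$-removable in $G$ if $d_G(v)\le d$ and at most one neighbour $w$ of $v$ has $d_G(w)>d$. A graph $G$ is strongly $d$-degenerate if every non-empty subgraph $G'$ of $G$ contains a vertex which is $d$-removable in $G'$. *)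

From mathcomp Require Import all_boot.
Set Implicit Arguments. Unset Strict Implicit. Unset Printing Implicit Defensive.

Definition simple_graph (T : finType) (e : rel T) : Prop :=
  symmetric e /\ irreflexive e.

Definition subgraph (T : finType) (e : rel T) (S : {set T}) (e' : rel T) : Prop :=
  symmetric e' /\ (forall x y, e' x y -> e x y) /\
  (forall x y, e' x y -> (x \in S) && (y \in S)).

Definition deg (T : finType) (S : {set T}) (e' : rel T) (v : T) : nat :=
  #|[set w in S | e' v w]|.

Definition removable (T : finType) (d : nat) (S : {set T}) (e' : rel T) (v : T) : bool :=
  (v \in S) && (deg S e' v <= d) &&
  (#|[set w in S | e' v w & d < deg S e' w]| <= 1).

Definition strongly_degenerate (T : finType) (e : rel T) (d : nat) : Prop :=
  forall (S : {set T}) (e' : rel T), subgraph e S e' -> S != set0 ->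
    exists2 v, v \in S & removable d S e' v.

Definition strategy (T : finType) (e : rel T) (q : nat)
    (f : T -> {ffun T -> 'I_q} -> 'I_q) : Prop :=
  forall v (c c' : {ffun T -> 'I_q}),
    (forall w, e v w -> c w = c' w) -> f v c = f v c'.

Definition winning (T : finType) (e : rel T) (q : nat)
    (f : T -> {ffun T -> 'I_q} -> 'I_q) : Prop :=
  strategy e f /\ forall c : {ffun T -> 'I_q}, exists v, f v c = c v.

Definition hat_winnable (T : finType) (e : rel T) (q : nat) : Prop :=
  exists f : T -> {ffun T -> 'I_q} -> 'I_q, winning e f.

From mathcomp Require Import all_boot zify.
Set Implicit Arguments. Unset Strict Implicit. Unset Printing Implicit Defensive.

(* Strengthen the game: every vertex v may guess a whole set of at most
   (2d)^(d - deg v) colours, and we show that for q > (2d)^d some colouring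
   defeats all guesses.  Remove a d-removable vertex v.  A neighbour u of v
   now guesses those colours a that its old set contains for more than
   cap(u) colours of v, where cap(u) = q/2 if deg u > d and (q-1)/(2d)
   otherwise; double counting keeps the new sets within the bound for G - v,
   in which the degree of u has dropped by one.  Induction colours G - v,
   and then each neighbour u forbids at most cap(u) colours for v.  As v has
   at most one neighbour of degree > d and at most d neighbours in all,
   fewer than q colours are forbidden, so v can still be coloured. *)

Lemma leq_card_bigcup (I T : finType) (P : {pred I}) (F : I -> {set T}) :
  #|\bigcup_(i in P) F i| <= \sum_(i in P) #|F i|.
Proof.
apply: (big_ind2 (fun (A : {set T}) n => #|A| <= n)) => [|A m B n leAm leBn|//].
  by rewrite cards0.
exact: leq_trans (leq_card_setU A B).1 (leq_add leAm leBn).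
Qed.

Lemma sum_card_preimage (I J : finType) (F : I -> {set J}) :
  \sum_j #|[set i | j \in F i]| = \sum_i #|F i|.
Proof.
under eq_bigr do rewrite -sum1_card big_mkcond.
rewrite exchange_big; apply: eq_bigr => i _.
by rewrite -sum1_card [RHS]big_mkcond; apply: eq_bigr => j _; rewrite inE.
Qed.

Lemma card_popular_leq (I J : finType) (F : I -> {set J}) (s t : nat) :
  (forall i, #|F i| <= s) ->
  #|[set j | t <= #|[set i | j \in F i]|]| * t <= #|I| * s.
Proof.
move=> leFs; rewrite -sum_nat_const.
apply: leq_trans (_ : \sum_(j in [set j | t <= #|[set i | j \in F i]|])
                        #|[set i | j \in F i]| <= _).
  by apply: leq_sum => j; rewrite inE.
apply: leq_trans (_ : _ <= \sum_i #|F i|) _.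
  rewrite -sum_card_preimage.
  rewrite [X in _ <= X](bigID [in [set j | t <= #|[set i | j \in F i]|]]).
  exact: leq_addr.
by rewrite -sum_nat_const leq_sum.
Qed.

Lemma bad_colours_lt (d q h l : nat) : 0 < d -> (2 * d) ^ d < q ->
  h <= 1 -> h + l <= d ->
  (2 * d) ^ (d - (h + l)) + h * q./2 + l * (q.-1 %/ (2 * d)) < q.
Proof.
move=> d_gt0 q_big h_le1 hl_led.
have [hl0|hl_gt0] := posnP (h + l).
  have [-> ->] : h = 0 /\ l = 0 by lia.
  by rewrite !mul0n !addn0 subn0.
set m := q.-1 %/ (2 * d).
have pow_le_m : (2 * d) ^ (d - (h + l)) <= m.
  rewrite leq_divRL; last by lia.
  rewrite -expnSr (leq_trans (leq_pexp2l _ (_ : _ <= d))) //; lia.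
have dm_le : (d * m).*2 <= q.-1.
  by rewrite -mul2n mulnA mulnC /m leq_divM.
have m_le : m <= d * m by rewrite leq_pmull.
have half_le : (q./2).*2 <= q by rewrite -{2}(odd_double_half q) leq_addl.
have lm_le : h * m + l * m <= d * m by rewrite -mulnDl leq_mul2r hl_led orbT.
case: h h_le1 hl_led hl_gt0 pow_le_m lm_le => [|[|//]] _ *; lia.
Qed.

Section GuessSets.

Variables (T : finType) (e : rel T) (d q : nat).
Hypotheses (e_sym : symmetric e) (e_irr : irreflexive e).
Hypotheses (d_gt0 : 0 < d) (q_big : (2 * d) ^ d < q).

Local Notation colouring := {ffun T -> 'I_q}.
Local Notation guesses := (T -> colouring -> {set 'I_q}).

Definition induced (S : {set T}) : rel T :=
  fun x y => [&& x \in S, y \in S & e x y].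

Definition recolour (c : colouring) (v : T) (b : 'I_q) : colouring :=
  [ffun w => if w == v then b else c w].

Definition local_guesses (S : {set T}) (g : guesses) : Prop :=
  forall v, v \in S -> forall c c' : colouring,
    (forall w, w \in S -> e v w -> c w = c' w) -> g v c = g v c'.

(* The subtraction is truncated: a vertex of degree > d gets a single guess. *)
Definition bounded_guesses (S : {set T}) (g : guesses) : Prop :=
  forall v c, v \in S -> #|g v c| <= (2 * d) ^ (d - deg S (induced S) v).

Definition avoids (S : {set T}) (g : guesses) (c : colouring) : Prop :=
  forall v, v \in S -> c v \notin g v c.

Definition capacity (S : {set T}) (u : T) : nat :=
  if d < deg S (induced S) u then q./2 else q.-1 %/ (2 * d).

Definition reduced_guesses (S : {set T}) (v : T) (g : guesses) : guesses :=
  fun u c => if e v u then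
    [set a | capacity S u < #|[set b | a \in g u (recolour c v b)]|]
  else g u c.

Lemma induced_subgraph (S : {set T}) : subgraph e S (induced S).
Proof.
split; first by move=> x y; rewrite /induced andbCA e_sym.
by split=> x y /and3P[xS yS exy]; rewrite ?xS ?yS.
Qed.

Lemma deg_induced (S : {set T}) (u : T) :
  u \in S -> deg S (induced S) u = #|[set w in S | e u w]|.
Proof.
move=> uS; apply: eq_card => w; rewrite !inE /induced uS /=.
by case: (w \in S).
Qed.

Lemma deg_induced_setD1 (S : {set T}) (u v : T) : u \in S :\ v -> v \in S ->
  deg S (induced S) u = e u v + deg (S :\ v) (induced (S :\ v)) u.
Proof.
move=> uSv vS; have /setD1P[_ uS] := uSv.
rewrite !deg_induced // (cardsD1 v [set w in S | e u w]) inE vS.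
by congr (_ + _); apply: eq_card => w; rewrite !inE andbA.
Qed.

Lemma recolour_nonadj (S : {set T}) (g : guesses) c v b x :
  local_guesses S g -> x \in S -> ~~ e x v -> g x (recolour c v b) = g x c.
Proof.
move=> g_loc xS not_exv; apply: g_loc => // w _ exw; rewrite ffunE.
by case: eqP => // wv; rewrite -wv exw in not_exv.
Qed.

Lemma local_reduced_guesses (S : {set T}) (v : T) (g : guesses) :
  local_guesses S g -> local_guesses (S :\ v) (reduced_guesses S v g).
Proof.
move=> g_loc u /setD1P[uv uS] c c' eq_cc'; rewrite /reduced_guesses.
case: ifP => evu; last first.
  apply: g_loc => // w wS euw; apply: eq_cc' => //; rewrite !inE wS andbT.
  by apply: contraFneq evu => <-; rewrite e_sym.
apply/setP => a; rewrite !inE; congr (_ < _); apply: eq_card => b; rewrite !inE.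
rewrite (g_loc u uS (recolour c v b) (recolour c' v b)) // => w wS euw.
by rewrite !ffunE; case: eqP => // /eqP wv; apply: eq_cc'; rewrite // !inE wv.
Qed.

Lemma bounded_reduced_guesses (S : {set T}) (v : T) (g : guesses) :
  v \in S -> bounded_guesses S g ->
  bounded_guesses (S :\ v) (reduced_guesses S v g).
Proof.
move=> vS g_bd u c uSv; have /setD1P[_ uS] := uSv.
have := deg_induced_setD1 uSv vS; rewrite /reduced_guesses [e u v]e_sym.
case: ifP => _ degSu; last by rewrite -[deg _ _ u]add0n -degSu g_bd.
rewrite add1n in degSu.
have := card_popular_leq (capacity S u).+1
  (fun b => g_bd u (recolour c v b) uS).
rewrite card_ord /capacity degSu; set n := deg (S :\ v) _ u; set X := #|_|.
case: ifP => heavy count.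
  have -> : d - n = 0 by lia.
  rewrite (_ : d - n.+1 = 0) ?expn0 ?muln1 in count; last by lia.
  have := odd_double_half q; rewrite -addnn; nia.
have -> : d - n = (d - n.+1).+1 by lia.
rewrite expnS mulnC; move: count; set s := (2 * d) ^ _ => count.
have q_le : q <= (q.-1 %/ (2 * d)).+1 * (2 * d).
  by have := ltn_ceil q.-1 (_ : 0 < 2 * d); lia.
rewrite -(leq_pmul2r (ltn0Sn (q.-1 %/ (2 * d)))) (leq_trans count) //.
by rewrite [q * s]mulnC -mulnA leq_mul2l mulnC q_le orbT.
Qed.

Lemma sum_capacity (S N : {set T}) :
  \sum_(u in N) capacity S u =
    #|N :&: [set u | d < deg S (induced S) u]| * q./2 +
    #|N :\: [set u | d < deg S (induced S) u]| * (q.-1 %/ (2 * d)).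
Proof.
rewrite (big_setID [set u | d < deg S (induced S) u]) -!sum_nat_const.
by congr (_ + _); apply: eq_bigr => u; rewrite !inE /capacity;
  [case/andP => _ -> | case/andP => /negPf ->].
Qed.

Lemma avoids_recolour (S : {set T}) (v : T) (g : guesses) (c : colouring) :
  v \in S -> removable d S (induced S) v ->
  local_guesses S g -> bounded_guesses S g ->
  avoids (S :\ v) (reduced_guesses S v g) c ->
  exists b, avoids S g (recolour c v b).
Proof.
move=> vS /andP[/andP[_ deg_v] heavy_le1] g_loc g_bd c_avoids.
set N := [set w in S | induced S v w].
have N_adj u : u \in N -> u \in S :\ v /\ e v u.
  rewrite inE /induced vS /= => /andP[uS /andP[_ evu]].
  rewrite !inE uS andbT; split=> //.
  by apply: contraTneq evu => ->; rewrite e_irr.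
pose forced u := [set b | c u \in g u (recolour c v b)].
pose bad := g v c :|: \bigcup_(u in N) forced u.
have card_forced u : u \in N -> #|forced u| <= capacity S u.
  case/N_adj => uSv evu; have := c_avoids u uSv.
  by rewrite /reduced_guesses evu inE -leqNgt.
have card_bad : #|bad| < q.
  set H := [set u | d < deg S (induced S) u].
  have heavy_N : #|N :&: H| <= 1.
    rewrite (leq_trans _ heavy_le1) // subset_leq_card //.
    by apply/subsetP => w; rewrite !inE => /andP[/andP[-> ->] ->].
  have deg_vE : deg S (induced S) v = #|N :&: H| + #|N :\: H| by rewrite cardsID.
  rewrite deg_vE in deg_v.
  apply: leq_ltn_trans (bad_colours_lt d_gt0 q_big heavy_N deg_v).
  rewrite -deg_vE -addnA -sum_capacity (leq_trans (leq_card_setU _ _).1) //.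
  rewrite leq_add ?g_bd //.
  by rewrite (leq_trans (leq_card_bigcup _ _)) // leq_sum.
have [b _ b_good] : exists2 b, b \in [set: 'I_q] & b \notin bad.
  apply/subsetPn; apply: contraTN card_bad => /subset_leq_card.
  by rewrite cardsT card_ord -leqNgt.
exists b => x xS; rewrite ffunE.
have [->|xv] := eqVneq x v.
  rewrite (recolour_nonadj c b g_loc vS) ?e_irr //.
  by move: b_good; rewrite inE negb_or => /andP[].
have [evx|not_evx] := boolP (e v x).
  have xN : x \in N by rewrite !inE /induced vS xS evx.
  apply: contra b_good => cx_forced; rewrite inE; apply/orP; right.
  by apply/bigcupP; exists x => //; rewrite inE.
have xSv : x \in S :\ v by rewrite !inE xv.
rewrite (recolour_nonadj c b g_loc xS) 1?e_sym //.
by have := c_avoids x xSv; rewrite /reduced_guesses (negPf not_evx).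
Qed.

Lemma avoidable_guesses (S : {set T}) (g : guesses) :
  strongly_degenerate e d -> local_guesses S g -> bounded_guesses S g ->
  exists c, avoids S g c.
Proof.
move=> e_degen; have [n] := ubnP #|S|.
elim: n S g => // n IHn S g card_S g_loc g_bd.
have [->|S_ne0] := eqVneq S set0.
  have q_gt0 : 0 < q by apply: leq_ltn_trans q_big.
  by exists [ffun=> Ordinal q_gt0] => v; rewrite inE.
have [v vS v_rem] := e_degen S (induced S) (induced_subgraph S) S_ne0.
have card_Sv : #|S :\ v| < n by move: card_S; rewrite (cardsD1 v S) vS.
have [c c_avoids] := IHn _ _ card_Sv (local_reduced_guesses (v := v) g_loc)
  (bounded_reduced_guesses vS g_bd).
have [b b_avoids] := avoids_recolour vS v_rem g_loc g_bd c_avoids.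
by exists (recolour c v b).
Qed.

End GuessSets.

Theorem theorem1p1 (d : nat) (T : finType) (e : rel T) :
  1 <= d -> simple_graph e -> strongly_degenerate e d ->
  forall q : nat, hat_winnable e q -> q <= (2 * d) ^ d.
Proof.
move=> d_gt0 [e_sym e_irr] e_degen q [f [f_strat f_win]].
rewrite leqNgt; apply/negP => q_big.
pose g v c := [set f v c].
have g_loc : local_guesses e [set: T] g.
  by move=> v _ c c' eq_cc'; rewrite /g (f_strat v c c') // => w; apply: eq_cc'.
have g_bd : bounded_guesses e d [set: T] g.
  by move=> v c _; rewrite cards1 expn_gt0 addn_gt0 d_gt0.
have [c c_avoids] :=
  avoidable_guesses e_sym e_irr d_gt0 q_big e_degen g_loc g_bd.
have [v fvc] := f_win c.
by have := c_avoids v (in_setT v); rewrite inE fvc eqxx.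
Qed.
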